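(* Let $p$ be a prime and $k\ge 0$ an integer, and let $T_{p,k}:=\{r\in\mathbb{Q}_{>0}: v_p(r)=0,\ v_p(r-1)\le k\}$. Then $$\chi(G(T_{p,k}))\le p^k(p-1).$$
   Context: For $R\subseteq\mathbb{Q}_{>0}\setminus\{1\}$, $G(R)$ is the graph with vertex set $\mathbb{N}=\{1,2,\dots\}$ and edge set $\{\{m,n\}: m/n\in R\}$. $\chi$ denotes chromatic number; $v_p$ is the $p$-adic valuation on $\mathbb{Q}$, $v_p(0)=\infty$. *)

From mathcomp Require Import all_boot all_order all_algebra.
Set Implicit Arguments. Unset Strict Implicit. Unset Printing Implicit Defensive.
Import Order.TTheory GRing.Theory Num.Theory.
Local Open Scope ring_scope.

(* p-adic valuation on Q, with v_p(0) = infinity encoded as None. *)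
Definition padic_val (p : nat) (r : rat) : option int :=
  if r == 0 then None
  else Some ((logn p `|numq r|%N)%:Z - (logn p `|denq r|%N)%:Z).

Definition val_le (v : option int) (k : int) : bool :=
  if v is Some z then z <= k else false.

Definition T_set (p k : nat) (r : rat) : Prop :=
  0 < r /\ padic_val p r = Some 0 /\ val_le (padic_val p (r - 1)) k%:Z.

Definition G_edge (R : rat -> Prop) (m n : nat) : Prop :=
  (0 < m)%N /\ (0 < n)%N /\ R (m%:R / n%:R).

Definition chi_le (R : rat -> Prop) (N : nat) : Prop :=
  exists c : nat -> 'I_N, forall m n : nat, G_edge R m n -> c m <> c n.

(* Write n = p^(v_p n) * n' with p not dividing n', and colour n by the class
   of n' modulo p^(k+1), which is a unit; there are totient (p^(k+1)) =
   p^k (p-1) units.  If m/n lies in T_{p,k} then v_p m = v_p n =: e, so equal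
   colours would give p^(e+k+1) | m - n, i.e. v_p (m/n - 1) >= k+1. *)

From mathcomp Require Import all_boot all_order all_algebra.
From mathcomp Require Import zify.
Import Order.TTheory GRing.Theory Num.Theory.

Set Implicit Arguments.
Unset Strict Implicit.
Unset Printing Implicit Defensive.

Lemma card_coprime_ord q : #|[pred i : 'I_q | coprime q i]| = totient q.
Proof.
rewrite totient_count_coprime big_mkord -sum1_card big_mkcond /=.
by apply: eq_bigr => i _; rewrite inE; case: coprime.
Qed.

Lemma chi_le_card (R : rat -> Prop) (T : finType) (A : {pred T}) (c : nat -> T) :
  (forall n, (0 < n)%N -> c n \in A) ->
  (forall m n, G_edge R m n -> c m <> c n) -> chi_le R #|A|.
Proof.
move=> cA c_proper; have cA1 := cA 1%N isT.
exists (fun n => enum_rank_in cA1 (c n)) => m n edge_mn.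
have [m0 [n0 _]] := edge_mn.
by move/(enum_rank_in_inj (cA m m0) (cA n n0)); apply: c_proper.
Qed.

Lemma dvdn_dist_partn p j m n : prime p -> (0 < m)%N -> (0 < n)%N ->
  logn p m = logn p n -> m`_p^' = n`_p^' %[mod p ^ j] ->
  (p ^ (logn p n + j) %| `|m - n|)%N.
Proof.
move=> p_pr; wlog le_mn : m n / (m <= n)%N => [hwlog m0 n0 eq_v eq_mod|m0 n0 eq_v].
  case: (leqP m n) => [|/ltnW] le; first exact: hwlog.
  by rewrite distnC -eq_v; apply: hwlog.
have dist_eq : n - m = p ^ logn p n * (n`_p^' - m`_p^').
  by rewrite mulnBr -{2}eq_v -!p_part (partnC p n0) (partnC p m0).
have pe_gt0 : (0 < p ^ logn p n)%N by rewrite expn_gt0 prime_gt0.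
move=> eq_mod; rewrite distnEr // dist_eq expnD dvdn_pmul2l //.
rewrite -eqn_mod_dvd ?eq_mod // -(leq_pmul2l pe_gt0).
by rewrite -{1}eq_v -!p_part (partnC p n0) (partnC p m0).
Qed.

Local Open Scope ring_scope.

Lemma padic_val_ratio p (u : int) (w : nat) : u != 0 -> (0 < w)%N ->
  padic_val p (u%:~R / w%:R) = Some ((logn p `|u|)%:Z - (logn p w)%:Z).
Proof.
move=> u0 w0; set r := _ / _.
have r0 : r != 0 by rewrite mulf_eq0 negb_or intr_eq0 u0 invr_eq0 pnatr_eq0 -lt0n.
rewrite /padic_val (negbTE r0); congr Some.
have cross : numq r * w%:Z = u * denq r.
  apply: (@intr_inj rat); rewrite !rmorphM /=.
  have /eqP := divq_num_den r.
  rewrite eqr_div ?intr_eq0 ?denq_neq0 ?pnatr_eq0 -?lt0n //.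
  by move/eqP; rewrite pmulrn.
have num_gt0 : (0 < `|numq r|)%N by rewrite absz_gt0 numq_eq0.
have den_gt0 : (0 < `|denq r|)%N by rewrite absz_gt0 denq_neq0.
have u_gt0 : (0 < `|u|)%N by rewrite absz_gt0.
have /(congr1 (logn p \o absz)) /= := cross.
rewrite !abszM !lognM //=; lia.
Qed.

Lemma T_set_ratio p k m n : (0 < m)%N -> (0 < n)%N -> T_set p k (m%:R / n%:R) ->
  [/\ logn p m = logn p n, m != n & (logn p `|m - n| <= logn p n + k)%N].
Proof.
move=> m0 n0 [_ [v_ratio v_diff]].
have m_neq0 : m%:Z != 0 by rewrite -lt0n.
move: v_ratio; rewrite -[m%:R]/((m%:Z)%:~R) padic_val_ratio // => -[] /eqP.
rewrite subr_eq0 => /eqP [] eq_v.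
have [eq_mn|neq_mn] := eqVneq m n.
  by move: v_diff; rewrite eq_mn divff ?subrr // pnatr_eq0 -lt0n.
have diffE : m%:R / n%:R - 1 = (m%:Z - n%:Z)%:~R / n%:R :> rat.
  by rewrite rmorphB /= mulrBl divff // pnatr_eq0 -lt0n.
have diff_neq0 : m%:Z - n%:Z != 0 by rewrite subr_eq0 eqz_nat.
move: v_diff; rewrite diffE padic_val_ratio //= => v_le.
by split => //; move: v_le; rewrite lerBlDr -PoszD lez_nat addnC.
Qed.

Theorem proposition2p3 (p k : nat) (hp : prime p) :
  chi_le (T_set p k) (p ^ k * (p - 1)).
Proof.
pose q := (p ^ k.+1)%N.
have q_gt0 : (0 < q)%N by rewrite expn_gt0 prime_gt0.
pose colour n : 'I_q := Ordinal (ltn_pmod n`_p^' q_gt0).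
have -> : (p ^ k * (p - 1))%N = #|[pred i : 'I_q | coprime q i]|.
  by rewrite card_coprime_ord totient_pfactor // subn1 mulnC.
apply: (@chi_le_card _ _ _ colour) => [n n0|m n [m0 [n0 T_mn]] /(congr1 val) /= eq_mod].
  rewrite inE coprime_modr coprime_pexpl // prime_coprime // -p'natE //.
  exact: part_pnat.
have [eq_v neq_mn v_le] := T_set_ratio m0 n0 T_mn.
have := dvdn_dist_partn hp m0 n0 eq_v eq_mod.
rewrite pfactor_dvdn // ?absz_gt0 ?subr_eq0 ?eqz_nat //.
by rewrite addnS ltnNge v_le.
Qed.
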